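(* Let $K$ be an algebraically closed field and $\varphi:V\to V$ a $K$-linear map of a finite dimensional $K$-vector space $V$. Let $\{\lambda_1,\dots,\lambda_p\}\subseteq K$ be the set of all ($p$ distinct) eigenvalues of $\varphi$ and $m_i=\dim(\ker(\varphi-\lambda_i1_V))$. Then for each $1\le i\le p$ there exists a $K$-subalgebra $\mathcal M_i$ of the full matrix algebra $M_{m_i\times m_i}(K[t])$ such that the centralizer $C_\varphi=\{\psi\in\mathrm{Hom}_K(V,V)\mid\psi\circ\varphi=\varphi\circ\psi\}$ is a homomorphic image of the direct product $K$-algebra $\mathcal M_1\times\mathcal M_2\times\cdots\times\mathcal M_p$.
   Context: $K[t]$ is the polynomial ring over $K$ in one indeterminate. *)

From HB Require Import structures.
From mathcomp Require Import all_boot all_order all_algebra.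
Set Implicit Arguments. Unset Strict Implicit. Unset Printing Implicit Defensive.
Import Order.TTheory GRing.Theory Num.Theory.
Local Open Scope ring_scope.

(* Linear maps of V = K^n are represented by n x n matrices acting on row
   vectors (v |-> v *m phi), as in mxalgebra ([eigenvalue], [eigenspace]). *)

Definition is_K_subalgebra (K : fieldType) (m : nat)
    (S : pred 'M[{poly K}]_m) : Prop :=
  [/\ (1%:M : 'M[{poly K}]_m) \in S,
      forall A B, A \in S -> B \in S -> A + B \in S,
      forall A B, A \in S -> B \in S -> A *m B \in S
    & forall (c : K) A, A \in S -> c%:P *: A \in S].

Definition centralizer (K : fieldType) (n : nat) (phi : 'M[K]_n) :
  pred 'M[K]_n := fun psi => psi *m phi == phi *m psi.

From HB Require Import structures.
From mathcomp Require Import all_boot all_order all_algebra.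
From mathcomp Require Import boolp.
From Stdlib Require Import ClassicalEpsilon.
Set Implicit Arguments. Unset Strict Implicit. Unset Printing Implicit Defensive.
Import GRing.Theory.
Local Open Scope ring_scope.

(* Put V_i := geigenspace phi (lam i) and N_i := phi - lam_i. Since N_i is
   nilpotent on V_i, any complement G_i of V_i N_i in V_i spans V_i as a
   K[phi]-module, and G_i has \rank (V_i :&: kermx N_i) = m_i rows. A map psi
   commuting with phi preserves V_i, so it sends the rows of G_i to
   K[phi]-combinations of them; the coefficients form A_i in M_{m_i}(K[t]), and
   psi is determined by (A_i)_i because V is the sum of the V_i. Conversely,
   commuting maps realizing each A_i separately are glued with the polynomial
   projectors onto the V_i given by Bezout. Hence M_i := the matrices realized
   by some commuting map is a subalgebra, and sending (A_i)_i to the unique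
   commuting map realizing all of them is a surjective algebra morphism onto
   the centralizer. *)

Lemma comm_mxZ (K : fieldType) (n : nat) (f g : 'M[K]_n) (a : K) :
  comm_mx f g -> comm_mx f (a *: g).
Proof. by rewrite /comm_mx -scalemxAl -scalemxAr => ->. Qed.

Section NilpotentGenerators.
Variables (K : fieldType) (n : nat) (N : 'M[K]_n).

Lemma sub_sums_genmx_mulX m1 m2 (V : 'M_(m1, n)) (G : 'M_(m2, n)) k :
  (V <= G + V *m N)%MS -> V *m N ^+ k = 0 ->
  (V <= \sum_(j < k) <<G *m N ^+ j>>)%MS.
Proof.
move=> VGN VNk0.
have VN_sum j : (V <= \sum_(i < j) <<G *m N ^+ i>> + V *m N ^+ j)%MS.
  elim: j => [|j IHj]; first by rewrite big_ord0 expr0 mulmx1 addsmxSr.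
  apply: (submx_trans IHj); rewrite big_ord_recr /= -addsmxA addsmxS //.
  rewrite (adds_eqmx (genmxE _) (eqmx_refl _)).
  apply: (submx_trans (submxMr (N ^+ j) VGN)).
  by rewrite addsmxMr -mulmxA mulmxE -exprS.
by have := VN_sum k; rewrite VNk0 addsmx0.
Qed.

Lemma mxrank_diff_mul_ker m (V : 'M_(m, n)) : (V *m N <= V)%MS ->
  \rank (V :\: V *m N) = \rank (V :&: kermx N).
Proof.
move=> VNV; have := mxrank_cap_compl V (V *m N).
rewrite (capmx_idPr VNV) -(mxrank_mul_ker V N).
by move/eqP; rewrite eqn_add2l => /eqP.
Qed.

End NilpotentGenerators.

Section GeneralizedEigenspace.
Variables (K : fieldType) (n : nat) (phi : 'M[K]_n.+1).

Lemma horner_mx_XsubC_exp a j :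
  horner_mx phi (('X - a%:P) ^+ j) = (phi - a%:M) ^+ j.
Proof. by rewrite rmorphXn /= rmorphB /= horner_mx_X horner_mx_C. Qed.

Lemma geigenspace_generators a :
  exists G : 'M_(\rank (eigenspace phi a), n.+1),
    (G <= geigenspace phi a)%MS /\
    (geigenspace phi a <= \sum_(j < n.+1) <<G *m (phi - a%:M) ^+ j>>)%MS.
Proof.
set N := phi - a%:M; set V := geigenspace phi a.
have VNV : (V *m N <= V)%MS.
  exact/comm_mx_stable_geigenspace/comm_mxB/comm_mx_scalar.
have rkG : \rank (V :\: V *m N) = \rank (eigenspace phi a).
  by rewrite mxrank_diff_mul_ker // (capmx_idPr (eigenspace_sub_geigen _ _)).
have GV : (row_base (V :\: V *m N) <= V)%MS by rewrite eq_row_base diffmxSl.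
have VGN : (V <= row_base (V :\: V *m N) + V *m N)%MS.
  by rewrite -{1}(addsmx_diff_cap_eq V (V *m N)) addsmxS ?eq_row_base ?capmxSr.
move: (\rank _) (row_base _) rkG GV VGN => r G <- GV VGN.
exists G; split => //; apply: sub_sums_genmx_mulX VGN _.
by rewrite /V geigenspaceE mulmx_ker.
Qed.

End GeneralizedEigenspace.

Section PolynomialAction.
Variables (K : fieldType) (n m : nat) (phi : 'M[K]_n.+1) (G : 'M[K]_(m, n.+1)).

Definition acts_by (A : 'M[{poly K}]_m) (psi : 'M[K]_n.+1) :=
  forall k, row k G *m psi = \sum_l row l G *m horner_mx phi (A k l).

Lemma acts_by1 : acts_by 1%:M 1%:M.
Proof.
move=> k; rewrite mulmx1 (bigD1 k) //= big1 ?addr0 => [|l lk].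
  by rewrite mxE eqxx mulr1n rmorph1 mulmx1.
by rewrite mxE eq_sym (negbTE lk) mulr0n rmorph0 mulmx0.
Qed.

Lemma acts_byD A B psi chi :
  acts_by A psi -> acts_by B chi -> acts_by (A + B) (psi + chi).
Proof.
move=> Apsi Bchi k; rewrite mulmxDr Apsi Bchi -big_split /=.
by apply: eq_bigr => l _; rewrite mxE rmorphD mulmxDr.
Qed.

Lemma acts_byM A B psi chi : comm_mx phi chi ->
  acts_by A psi -> acts_by B chi -> acts_by (A *m B) (psi *m chi).
Proof.
move=> phi_chi Apsi Bchi k; rewrite mulmxA Apsi mulmx_suml.
under eq_bigr do
  rewrite -mulmxA -(comm_mx_horner _ (comm_mx_sym phi_chi)) mulmxA Bchi mulmx_suml.
rewrite exchange_big /=; apply: eq_bigr => j _.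
rewrite mxE rmorph_sum mulmx_sumr; apply: eq_bigr => l _.
by rewrite -mulmxA mulrC rmorphM.
Qed.

Lemma acts_byZ c A psi : acts_by A psi -> acts_by (c%:P *: A) (c *: psi).
Proof.
move=> Apsi k; rewrite -scalemxAr Apsi scaler_sumr; apply: eq_bigr => l _.
by rewrite mxE rmorphM /= horner_mx_C [_ * _]mul_scalar_mx scalemxAr.
Qed.

Lemma acts_by_exists a psi :
  (G *m psi <= \sum_(j < n.+1) <<G *m (phi - a%:M) ^+ j>>)%MS ->
  exists A, acts_by A psi.
Proof.
move=> /sub_sums_genmxP [u Gpsi].
exists (\matrix_(k, l) \sum_(j < n.+1) u j k l *: ('X - a%:P) ^+ j) => k.
rewrite -row_mul Gpsi raddf_sum.
under [RHS]eq_bigr do rewrite mxE rmorph_sum mulmx_sumr.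
rewrite exchange_big /=; apply: eq_bigr => j _.
rewrite row_mul mulmxA (mulmx_sum_row (row k (u j)) G) mulmx_suml.
apply: eq_bigr => l _.
by rewrite linearZ /= horner_mx_XsubC_exp -scalemxAl -scalemxAr mxE.
Qed.

End PolynomialAction.

Definition centralizer_presentation (K : fieldType) (n p : nat)
    (phi : 'M[K]_n) (m : 'I_p -> nat) : Prop :=
  exists S : forall i : 'I_p, pred 'M[{poly K}]_(m i),
    (forall i, is_K_subalgebra (S i)) /\
    exists f : (forall i : 'I_p, 'M[{poly K}]_(m i)) -> 'M[K]_n,
      let inP := fun A : forall i, 'M[{poly K}]_(m i) => forall i, A i \in S i in
      ([/\ f (fun i => 1%:M) = 1%:M,
          forall A B, inP A -> inP B -> f (fun i => A i + B i) = f A + f B,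
          forall A B, inP A -> inP B -> f (fun i => A i *m B i) = f A *m f B
        & forall (c : K) A, inP A -> f (fun i => c%:P *: A i) = c *: f A] /\
       (forall A, inP A -> f A \in centralizer phi) /\
       (forall psi, psi \in centralizer phi -> exists2 A, inP A & f A = psi)).

Lemma centralizer_presentation_flatmx (K : fieldType) (p : nat) (phi : 'M[K]_0)
    (m : 'I_p -> nat) :
  centralizer_presentation phi m.
Proof.
have flat_eq (A B : 'M[K]_0) : A = B by rewrite (flatmx0 A) (flatmx0 B).
exists (fun i _ => true); split => [i|]; first by split.
exists (fun _ => 0) => inP; split; [by split|split] => [A _|psi _].
  by rewrite unfold_in /centralizer mul0mx mulmx0.
by exists (fun i => 0); last exact: flat_eq.
Qed.

Section SpectralDecomposition.
Variables (K : closedFieldType) (n p : nat) (phi : 'M[K]_n.+1) (lam : 'I_p -> K).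
Hypothesis lam_inj : injective lam.
Hypothesis lam_all : forall a, eigenvalue phi a -> exists i, a = lam i.

Let Q i := ('X - (lam i)%:P) ^+ n.+1.

Lemma coprimep_geigen_poly i j : j != i -> coprimep (Q i) (Q j).
Proof.
move=> ji; rewrite /Q coprimep_expr ?coprimep_expl // coprimep_XsubC root_XsubC.
by apply: contra ji => /eqP /lam_inj ->.
Qed.

Lemma sum_geigenspace_full : (1%:M <= \sum_i geigenspace phi (lam i))%MS.
Proof.
have sumE : (kermxpoly phi (\prod_i Q i) :=: \sum_i geigenspace phi (lam i))%MS.
  by apply: kermxpoly_prod => i j _ _; apply: coprimep_geigen_poly.
rewrite -sumE kermxpoly_min //.
apply: dvdp_trans (mxminpoly_dvd_char phi) _.
have [rs charE] := closed_field_poly_normal (char_poly phi).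
rewrite (monicP (char_poly_monic phi)) scale1r in charE.
have size_rs : size rs = n.+1.
  by have := size_char_poly phi; rewrite charE size_prod_XsubC => -[].
have rs_lam z : z \in rs -> exists i, z = lam i.
  by move=> zrs; apply: lam_all; rewrite eigenvalue_root_char charE root_prod_XsubC.
rewrite charE /Q prodrXl -size_rs.
elim: rs rs_lam {charE size_rs} => [|z rs IHrs] rs_lam.
  by rewrite big_nil dvd1p.
rewrite big_cons exprS dvdp_mul //; last first.
  by apply: IHrs => y yrs; apply: rs_lam; rewrite inE yrs orbT.
have [i ->] := rs_lam z (mem_head _ _).
by rewrite (bigD1 i) //= dvdp_mulIl.
Qed.

Lemma geigenspace_projector i : exists e : {poly K},
  (forall v : 'rV_n.+1, (v <= geigenspace phi (lam i))%MS ->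
     v *m horner_mx phi e = v) /\
  (forall j (v : 'rV_n.+1), j != i -> (v <= geigenspace phi (lam j))%MS ->
     v *m horner_mx phi e = 0).
Proof.
have cop : coprimep (Q i) (\prod_(j | j != i) Q j).
  apply: (big_ind (coprimep (Q i))) => [|q r|j ji]; rewrite ?coprimep1 //.
    by rewrite coprimepMr => -> ->.
  exact: coprimep_geigen_poly.
have [[u w] /= Bezout] := Bezout_eq1_coprimepP _ _ cop.
exists (w * \prod_(j | j != i) Q j).
split=> [v /sub_kermxP vQ | j v ji /sub_kermxP vQ].
  have -> : w * \prod_(j | j != i) Q j = 1 - Q i * u.
    by rewrite -[in RHS]Bezout (mulrC (Q i)) addrAC subrr add0r.
  rewrite rmorphB rmorph1 rmorphM /= mulmxBr mulmx1 -mulmxE mulmxA.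
  by rewrite vQ mul0mx subr0.
by rewrite (bigD1 j) //= mulrCA rmorphM /= -mulmxE mulmxA vQ mul0mx.
Qed.

Section Generators.
Variables (m : 'I_p -> nat) (G : forall i, 'M[K]_(m i, n.+1)).
Hypothesis G_sub : forall i, (G i <= geigenspace phi (lam i))%MS.
Hypothesis G_span : forall i,
  (geigenspace phi (lam i)
     <= \sum_(j < n.+1) <<G i *m (phi - (lam i)%:M) ^+ j>>)%MS.

Lemma centralizer_eq0_on_generators psi :
  comm_mx phi psi -> (forall i, G i *m psi = 0) -> psi = 0.
Proof.
move=> phi_psi Gpsi0.
have geigen_ker i : (geigenspace phi (lam i) <= kermx psi)%MS.
  apply: submx_trans (G_span i) _; apply/sumsmx_subP => j _.
  rewrite genmxE; apply/sub_kermxP.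
  have := comm_mx_horner (('X - (lam i)%:P) ^+ j) (comm_mx_sym phi_psi).
  by rewrite horner_mx_XsubC_exp => psiN; rewrite -mulmxA -psiN mulmxA Gpsi0 mul0mx.
have /sub_kermxP : (1%:M <= kermx psi)%MS.
  apply: submx_trans sum_geigenspace_full _; exact/sumsmx_subP.
by rewrite mul1mx.
Qed.

Lemma acts_by_glue (A : forall i, 'M[{poly K}]_(m i)) (psi : 'I_p -> 'M[K]_n.+1) :
  (forall i, comm_mx phi (psi i)) -> (forall i, acts_by phi (G i) (A i) (psi i)) ->
  exists2 chi, comm_mx phi chi & forall i, acts_by phi (G i) (A i) chi.
Proof.
move=> phi_psi Apsi.
have [e e_proj] := fin_all_exists geigenspace_projector.
exists (\sum_i horner_mx phi (e i) *m psi i) => [|j k].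
  apply: comm_mx_sum => i _; apply: comm_mxM (phi_psi i).
  exact: comm_mx_horner (comm_mx_refl phi).
have Gj_row : (row k (G j) <= geigenspace phi (lam j))%MS.
  exact: submx_trans (row_sub k (G j)) (G_sub j).
rewrite mulmx_sumr (bigD1 j) //= big1 ?addr0 => [|i ij].
  by rewrite mulmxA (proj1 (e_proj j)) // Apsi.
by rewrite mulmxA (proj2 (e_proj i) j) ?mul0mx // eq_sym.
Qed.

Lemma acts_by_centralizer psi : comm_mx phi psi ->
  exists A : forall i, 'M[{poly K}]_(m i), forall i, acts_by phi (G i) (A i) psi.
Proof.
move=> phi_psi.
suff /fin_all_exists[A Apsi] :
    forall i, exists A : 'M_(m i), acts_by phi (G i) A psi.
  by exists A.
move=> i; apply: (acts_by_exists (a := lam i)); apply: submx_trans (G_span i).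
apply: submx_trans (submxMr psi (G_sub i)) _.
exact: comm_mx_stable_geigenspace.
Qed.

Definition realizable i : pred 'M[{poly K}]_(m i) :=
  fun A => `[< exists psi, comm_mx phi psi /\ acts_by phi (G i) A psi >].
Arguments realizable i : clear implicits.

Lemma realizableP i A :
  reflect (exists psi, comm_mx phi psi /\ acts_by phi (G i) A psi)
          (A \in realizable i).
Proof. exact: asboolP. Qed.

Lemma realizable_subalgebra i : is_K_subalgebra (realizable i).
Proof.
split=> [|A B|A B|c A].
- by apply/realizableP; exists 1%:M; split; [apply: comm_mx1 | apply: acts_by1].
- move=> /realizableP[psi [phi_psi Apsi]] /realizableP[chi [phi_chi Bchi]].
  apply/realizableP; exists (psi + chi).
  by split; [apply: comm_mxD | apply: acts_byD].
- move=> /realizableP[psi [phi_psi Apsi]] /realizableP[chi [phi_chi Bchi]].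
  apply/realizableP; exists (psi *m chi).
  by split; [apply: comm_mxM | apply: acts_byM].
- move=> /realizableP[psi [phi_psi Apsi]].
  apply/realizableP; exists (c *: psi).
  by split; [apply: comm_mxZ | apply: acts_byZ].
Qed.

Definition centralizer_lift (A : forall i, 'M[{poly K}]_(m i)) : 'M[K]_n.+1 :=
  epsilon (inhabits 0)
    (fun psi => comm_mx phi psi /\ forall i, acts_by phi (G i) (A i) psi).

Lemma centralizer_liftE A psi : comm_mx phi psi ->
  (forall i, acts_by phi (G i) (A i) psi) -> centralizer_lift A = psi.
Proof.
move=> phi_psi Apsi.
have [phi_lift Alift] := epsilon_spec (inhabits 0)
  (fun chi => comm_mx phi chi /\ forall i, acts_by phi (G i) (A i) chi)
  (ex_intro _ psi (conj phi_psi Apsi)).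
apply/eqP; rewrite -subr_eq0; apply/eqP/centralizer_eq0_on_generators.
  exact: comm_mxB.
by move=> i; apply/row_matrixP => k; rewrite row_mul row0 mulmxBr Alift Apsi subrr.
Qed.

Lemma centralizer_liftP A : (forall i, A i \in realizable i) ->
  comm_mx phi (centralizer_lift A) /\
  forall i, acts_by phi (G i) (A i) (centralizer_lift A).
Proof.
move=> A_real; suff [chi phi_chi Achi] :
    exists2 chi, comm_mx phi chi & forall i, acts_by phi (G i) (A i) chi.
  by rewrite (centralizer_liftE phi_chi Achi).
have /fin_all_exists[psi psiP] : forall i, exists psi,
    comm_mx phi psi /\ acts_by phi (G i) (A i) psi.
  by move=> i; apply/realizableP.
exact: acts_by_glue (fun i => proj1 (psiP i)) (fun i => proj2 (psiP i)).
Qed.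

Lemma centralizer_presentation_of_generators : centralizer_presentation phi m.
Proof.
exists realizable; split; first exact: realizable_subalgebra.
exists centralizer_lift => inP; split; [split|split].
- by apply: centralizer_liftE => [|i]; [apply: comm_mx1 | apply: acts_by1].
- move=> A B /centralizer_liftP[phiA AA] /centralizer_liftP[phiB BB].
  by apply: centralizer_liftE => [|i]; [apply: comm_mxD | apply: acts_byD].
- move=> A B /centralizer_liftP[phiA AA] /centralizer_liftP[phiB BB].
  by apply: centralizer_liftE => [|i]; [apply: comm_mxM | apply: acts_byM].
- move=> c A /centralizer_liftP[phiA AA].
  by apply: centralizer_liftE => [|i]; [apply: comm_mxZ | apply: acts_byZ].
- move=> A /centralizer_liftP[phiA _].
  by rewrite unfold_in /centralizer eq_sym; apply/comm_mxP.
move=> psi; rewrite unfold_in /centralizer eq_sym => /comm_mxP phi_psi.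
have [A Apsi] := acts_by_centralizer phi_psi.
by exists A; [move=> i; apply/realizableP; exists psi | apply: centralizer_liftE].
Qed.

End Generators.
End SpectralDecomposition.

Theorem theorem5p2 (K : closedFieldType) (n : nat) (phi : 'M[K]_n)
    (p : nat) (lam : 'I_p -> K)
    (lam_inj : injective lam)
    (lam_all : forall a : K, eigenvalue phi a <-> exists i, a = lam i) :
  let m := fun i : 'I_p => \rank (eigenspace phi (lam i)) in
  exists S : forall i : 'I_p, pred 'M[{poly K}]_(m i),
    (forall i, is_K_subalgebra (S i)) /\
    exists f : (forall i : 'I_p, 'M[{poly K}]_(m i)) -> 'M[K]_n,
      let inP := fun A : forall i, 'M[{poly K}]_(m i) => forall i, A i \in S i in
      ([/\ f (fun i => 1%:M) = 1%:M,
          forall A B, inP A -> inP B -> f (fun i => A i + B i) = f A + f B,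
          forall A B, inP A -> inP B -> f (fun i => A i *m B i) = f A *m f B
        & forall (c : K) A, inP A -> f (fun i => c%:P *: A i) = c *: f A] /\
       (forall A, inP A -> f A \in centralizer phi) /\
       (forall psi, psi \in centralizer phi -> exists2 A, inP A & f A = psi)).
Proof.
(* [horner_mx] is only defined on square matrices of size [n.+1]. *)
case: n phi lam_all => [|n] phi lam_all m.
  exact: centralizer_presentation_flatmx.
have [G G_gen] := fin_all_exists (fun i => geigenspace_generators phi (lam i)).
exact: (centralizer_presentation_of_generators lam_inj (fun a => (lam_all a).1)
          (fun i => proj1 (G_gen i)) (fun i => proj2 (G_gen i))).
Qed.
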